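(* Let $\mathbf I_F$ be a generalized Fisher information that is weakly faithful and subadditive on product-state families. Let $\{\mathcal N^\theta_{A\to B}\}_\theta$ be an environment-seizable channel family with environment state family $\{\rho^\theta_E\}_\theta$. Then $$\mathbf I^{\mathcal A}_F(\theta;\{\mathcal N^\theta_{A\to B}\}_\theta)=\mathbf I_F(\theta;\{\rho^\theta_E\}_\theta).$$
   Context: Finite-dimensional systems. A generalized Fisher information $\mathbf I_F$ assigns to each $\theta$ and family $\{\rho^\theta\}_\theta$ of density operators an extended real number with $\mathbf I_F(\theta;\{\rho^\theta_A\}_\theta)\ge\mathbf I_F(\theta;\{\mathcal K_{A\to B}(\rho^\theta_A)\}_\theta)$ for every $\theta$-independent channel $\mathcal K$; weakly faithful means it vanishes on $\theta$-independent families; subadditive on product-state families means $\mathbf I_F(\theta;\{\omega^\theta\otimes\tau^\theta\}_\theta)\le\mathbf I_F(\theta;\{\omega^\theta\}_\theta)+\mathbf I_F(\theta;\{\tau^\theta\}_\theta)$. Amortized Fisher information: $\mathbf I^{\mathcal A}_F(\theta;\{\mathcal N^\theta_{A\to B}\}_\theta):=\sup_{\{\rho^\theta_{RA}\}_\theta}[\mathbf I_F(\theta;\{\mathcal N^\theta_{A\to B}(\rho^\theta_{RA})\}_\theta)-\mathbf I_F(\theta;\{\rho^\theta_{RA}\}_\theta)]$ over state families with arbitrary reference $R$. The family is environment-parameterized with environment states $\{\rho^\theta_E\}_\theta$ if there is a $\theta$-independent channel $\mathcal M_{AE\to B}$ with $\mathcal N^\theta_{A\to B}(\omega_A)=\mathcal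 M_{AE\to B}(\omega_A\otimes\rho^\theta_E)$ for all inputs (acting as identity on any reference system); it is environment-seizable if moreover there exist a $\theta$-independent state $\zeta_{RA}$ and a $\theta$-independent channel $\mathcal D_{RB\to E}$ with $\mathcal D_{RB\to E}(\mathcal N^\theta_{A\to B}(\zeta_{RA}))=\rho^\theta_E$ for all $\theta$. *)

From HB Require Import structures.
From mathcomp Require Import all_boot all_order all_algebra.
From mathcomp Require Import complex mxtens.
From mathcomp Require Import classical_sets reals constructive_ereal ereal.

Set Implicit Arguments.
Unset Strict Implicit.
Unset Printing Implicit Defensive.

Import Order.TTheory GRing.Theory Num.Theory.
Local Open Scope ring_scope.

Section QuantumFisher.
Variable R : realType.
Local Notation C := (R[i]).

Definition adjmx m n (A : 'M[C]_(m, n)) : 'M[C]_(n, m) :=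
  (map_mx Num.conj A)^T.

Definition psd n (X : 'M[C]_n) : Prop :=
  forall v : 'cV[C]_n, 0 <= (adjmx v *m X *m v) 0 0.

Definition density n (X : 'M[C]_n) : Prop := psd X /\ \tr X = 1.

(* the (i,j) block of an operator on R (x) A, R of dimension k
   (Kronecker ordering of mxtens: index (i,a) |-> i * n + a) *)
Definition blockmx k n (X : 'M[C]_(k * n)) (i j : 'I_k) : 'M[C]_n :=
  \matrix_(a, b) X (mxtens_index (i, a)) (mxtens_index (j, b)).

Definition idtens k n m (Phi : 'M[C]_n -> 'M[C]_m) (X : 'M[C]_(k * n))
  : 'M[C]_(k * m) :=
  \sum_(i < k) \sum_(j < k) (delta_mx i j *t Phi (blockmx X i j)).
Arguments idtens k {n m} Phi X.

Definition is_channel n m (Phi : 'M[C]_n -> 'M[C]_m) : Prop :=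
  [/\ forall (c : C) (X Y : 'M[C]_n), Phi (c *: X + Y) = c *: Phi X + Phi Y,
      forall X : 'M[C]_n, \tr (Phi X) = \tr X
    & forall (k : nat) (X : 'M[C]_(k * n)), psd X -> psd (idtens k Phi X)].

(* a Fisher-information-like functional: to each system dimension n,
   parameter value theta and family theta' |-> rho^theta' it assigns an
   extended real *)
Definition FisherInfo := forall n : nat, R -> (R -> 'M[C]_n) -> \bar R.

Local Open Scope ereal_scope.

(* data processing under theta-independent channels: the defining property
   of a generalized Fisher information *)
Definition gen_fisher_info (IF : FisherInfo) : Prop :=
  forall n m (K : 'M[C]_n -> 'M[C]_m) (rho : R -> 'M[C]_n) (theta : R),
    is_channel K -> (forall t, density (rho t)) ->
    IF m theta (fun t => K (rho t)) <= IF n theta rho.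

Definition weakly_faithful (IF : FisherInfo) : Prop :=
  forall n (rho : 'M[C]_n) (theta : R), density rho ->
    IF n theta (fun _ => rho) = 0.

Definition subadditive_product (IF : FisherInfo) : Prop :=
  forall n m (om : R -> 'M[C]_n) (tau : R -> 'M[C]_m) (theta : R),
    (forall t, density (om t)) -> (forall t, density (tau t)) ->
    IF (n * m)%N theta (fun t => om t *t tau t)
      <= IF n theta om + IF m theta tau.

Definition amortized (IF : FisherInfo) a b
  (N : R -> 'M[C]_a -> 'M[C]_b) (theta : R) : \bar R :=
  ereal_sup [set x | exists (r : nat) (rho : R -> 'M[C]_(r * a)),
     (forall t, density (rho t)) /\
     x = IF (r * b)%N theta (fun t => idtens r (N t) (rho t))
         - IF (r * a)%N theta rho].

Definition env_parameterized a b e (N : R -> 'M[C]_a -> 'M[C]_b)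
  (rhoE : R -> 'M[C]_e) (M : 'M[C]_(a * e) -> 'M[C]_b) : Prop :=
  [/\ is_channel M,
      forall t, density (rhoE t),
      forall t (w : 'M[C]_a), density w -> N t w = M (w *t rhoE t)
    & forall (r : nat) t (w : 'M[C]_(r * a)), density w ->
        idtens r (N t) w =
        idtens r M (castmx (esym (mulnA r a e), esym (mulnA r a e))
                           (w *t rhoE t))].

Definition env_seizable a b e (N : R -> 'M[C]_a -> 'M[C]_b)
  (rhoE : R -> 'M[C]_e) : Prop :=
  (exists M : 'M[C]_(a * e) -> 'M[C]_b, env_parameterized N rhoE M) /\
  exists (r : nat) (zeta : 'M[C]_(r * a)) (D : 'M[C]_(r * b) -> 'M[C]_e),
    [/\ density zeta, is_channel D
      & forall t, D (idtens r (N t) zeta) = rhoE t].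

End QuantumFisher.

From HB Require Import structures.
From mathcomp Require Import all_boot all_order all_algebra.
From mathcomp Require Import complex mxtens spectral sesquilinear.
From mathcomp Require Import boolp classical_sets reals constructive_ereal ereal.
From mathcomp Require Import ring.

(* Environment parameterization rewrites the output of
   id_r (x) N^t on rho^t as (id_r (x) M)(rho^t (x) rho_E^t) for a
   theta-independent channel M.  As id_r (x) M is again a channel, data
   processing and subadditivity give
       I(id_r (x) N(rho)) <= I(rho (x) rho_E) <= I(rho) + I(rho_E),
   so every amortized difference is at most I(rho_E).  The theta-independent seizing state zeta has zero
   information (weak faithfulness) and the seizing channel D recovers rho_E^t
   from the output, so by data processing I(rho_E) <= I(id_r (x) N(zeta)) - 0. *)

Set Implicit Arguments.
Unset Strict Implicit.
Unset Printing Implicit Defensive.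
Import Order.TTheory GRing.Theory Num.Theory.
Local Open Scope ring_scope.

Section ChannelExtension.
Variable R : realType.
Local Notation C := (R[i]).
Local Notation idt k Phi := (@idtens _ k _ _ Phi).

Lemma sum_mxtens k m (F : 'I_(k * m) -> C) :
  \sum_p F p = \sum_(i < k) \sum_(a < m) F (mxtens_index (i, a)).
Proof.
rewrite pair_big /= (reindex (@mxtens_index k m)) /=.
  by apply: eq_bigr => -[].
by exists (@mxtens_unindex k m) => x _; rewrite (mxtens_indexK, mxtens_unindexK).
Qed.

Lemma idtensE k n m (Phi : 'M[C]_n -> 'M[C]_m) X i a j b :
  idt k Phi X (mxtens_index (i, a)) (mxtens_index (j, b)) =
  Phi (blockmx X i j) a b.
Proof.
rewrite /idtens summxE (bigD1 i) //= summxE (bigD1 j) //= tensmxE mxE !eqxx mul1r.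
rewrite big1 ?addr0; last first.
  by move=> j' /negbTE nj; rewrite tensmxE mxE [j == j']eq_sym nj andbF mul0r.
rewrite big1 ?addr0 // => i' /negbTE ni; rewrite summxE big1 // => j' _.
by rewrite tensmxE mxE [i == i']eq_sym ni mul0r.
Qed.

Lemma mxtrace_blocks k n (X : 'M[C]_(k * n)) : \tr X = \sum_i \tr (blockmx X i i).
Proof.
rewrite /mxtrace sum_mxtens; apply: eq_bigr => i _.
by apply: eq_bigr => a _; rewrite mxE.
Qed.

Lemma mxtrace_idtens k n m (Phi : 'M[C]_n -> 'M[C]_m) X :
  \tr (idt k Phi X) = \sum_i \tr (Phi (blockmx X i i)).
Proof.
rewrite mxtrace_blocks; apply: eq_bigr => i _.
by apply: eq_bigr => a _; rewrite mxE idtensE.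
Qed.

Lemma mxtrace_tensmx n m (A : 'M[C]_n) (B : 'M[C]_m) : \tr (A *t B) = \tr A * \tr B.
Proof.
rewrite /mxtrace sum_mxtens mulr_suml; apply: eq_bigr => i _.
by rewrite mulr_sumr; apply: eq_bigr => a _; rewrite tensmxE.
Qed.

Lemma mxtrace_castmx n m (E : n = m) (A : 'M[C]_n) : \tr (castmx (E, E) A) = \tr A.
Proof. by case: m / E; rewrite castmx_id. Qed.

Lemma psd_castmx n m (E : n = m) (A : 'M[C]_n) : psd A -> psd (castmx (E, E) A).
Proof. by case: m / E; rewrite castmx_id. Qed.

Lemma mxtens_index_assoc k r m (i : 'I_k) (j : 'I_r) (c : 'I_m) E :
  cast_ord E (mxtens_index (i, mxtens_index (j, c))) =
  mxtens_index (mxtens_index (i, j), c).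
Proof. by apply: val_inj => /=; rewrite mulnDl -mulnA addnA. Qed.

Lemma mxtens_index_assocV k r m (i : 'I_k) (j : 'I_r) (c : 'I_m) E :
  cast_ord E (mxtens_index (mxtens_index (i, j), c)) =
  mxtens_index (i, mxtens_index (j, c)).
Proof. by apply: val_inj => /=; rewrite mulnDl -mulnA addnA. Qed.

(* id_k (x) (id_r (x) Phi) = id_(k r) (x) Phi, up to regrouping indices; this
   reduces complete positivity of id_r (x) Phi to that of Phi. *)
Lemma idtens_idtens k r n m (Phi : 'M[C]_n -> 'M[C]_m) (X : 'M[C]_(k * (r * n))) :
  idt k (idt r Phi) X =
  castmx (esym (mulnA k r m), esym (mulnA k r m))
    (idt (k * r) Phi (castmx (mulnA k r n, mulnA k r n) X)).
Proof.
apply/matrixP => p q.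
case: (mxtens_indexP p) => i p'; case: (mxtens_indexP p') => j c.
case: (mxtens_indexP q) => i' q'; case: (mxtens_indexP q') => j' c'.
rewrite castmxE /= !mxtens_index_assoc (idtensE (idt r Phi)) !idtensE.
congr (Phi _ c c').
by apply/matrixP => x y; rewrite !mxE castmxE /= !mxtens_index_assocV.
Qed.

Lemma blockmx_linear k n (c : C) (X Y : 'M[C]_(k * n)) i j :
  blockmx (c *: X + Y) i j = c *: blockmx X i j + blockmx Y i j.
Proof. by apply/matrixP => x y; rewrite !mxE. Qed.

Lemma channel_idtens r n m (Phi : 'M[C]_n -> 'M[C]_m) :
  is_channel Phi -> is_channel (idt r Phi).
Proof.
case=> Phi_linear Phi_trace Phi_cp; split.
- move=> c X Y; apply/matrixP => p q.
  case: (mxtens_indexP p) => i a; case: (mxtens_indexP q) => j b.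
  by rewrite idtensE mxE [in RHS]mxE !idtensE blockmx_linear Phi_linear !mxE.
- move=> X; rewrite mxtrace_idtens mxtrace_blocks.
  by apply: eq_bigr => i _; rewrite Phi_trace.
- move=> k X psdX; rewrite idtens_idtens; apply/psd_castmx/Phi_cp.
  exact: psd_castmx.
Qed.

Lemma density_idtens r n m (Phi : 'M[C]_n -> 'M[C]_m) (X : 'M[C]_(r * n)) :
  is_channel Phi -> density X -> density (idt r Phi X).
Proof.
move=> Phi_channel [psdX trX]; have [_ _ Phi_cp] := Phi_channel.
have [_ trace_pres _] := channel_idtens r Phi_channel.
by split; [exact: Phi_cp | rewrite trace_pres].
Qed.

End ChannelExtension.

Section Positivity.
Variable R : realType.
Local Notation C := (R[i]).

Definition sform n (X : 'M[C]_n) (x y : 'cV[C]_n) : C := (adjmx x *m X *m y) 0 0.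

Lemma sformE n (X : 'M[C]_n) (x y : 'cV[C]_n) :
  sform X x y = \sum_i \sum_j (x i 0)^* * X i j * y j 0.
Proof.
rewrite /sform mxE; under eq_bigr do rewrite mxE mulr_suml.
rewrite exchange_big; apply: eq_bigr => i _; apply: eq_bigr => j _.
by rewrite !mxE.
Qed.

Lemma adjmxD m n (X Y : 'M[C]_(m, n)) : adjmx (X + Y) = adjmx X + adjmx Y.
Proof. by apply/matrixP => i j; rewrite !mxE rmorphD. Qed.

Lemma adjmxZ m n (c : C) (X : 'M[C]_(m, n)) : adjmx (c *: X) = c^* *: adjmx X.
Proof. by apply/matrixP => i j; rewrite !mxE rmorphM. Qed.

Lemma adjmxM m n p (X : 'M[C]_(m, n)) (Y : 'M[C]_(n, p)) :
  adjmx (X *m Y) = adjmx Y *m adjmx X.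
Proof. by rewrite /adjmx map_mxM trmx_mul. Qed.

Lemma adjmx1 n : adjmx (1%:M : 'M[C]_n) = 1%:M.
Proof. by rewrite /adjmx map_mx1 trmx1. Qed.

Lemma adjmx_tens m n p q (X : 'M[C]_(m, n)) (Y : 'M[C]_(p, q)) :
  adjmx (X *t Y) = adjmx X *t adjmx Y.
Proof. by rewrite /adjmx map_mxT trmx_tens. Qed.

Lemma sform_delta n (X : 'M[C]_n) i j :
  sform X (delta_mx i 0) (delta_mx j 0) = X i j.
Proof.
have adj_delta : adjmx (delta_mx i 0 : 'cV[C]_n) = delta_mx 0 i.
  by apply/matrixP => a b; rewrite !mxE rmorph_nat andbC.
by rewrite /sform adj_delta -mulmxA -colE -rowE !mxE.
Qed.

Lemma sform_expand n (X : 'M[C]_n) (x y : 'cV[C]_n) (c : C) :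
  sform X (x + c *: y) (x + c *: y) =
  sform X x x + c^* * c * sform X y y + c * sform X x y + c^* * sform X y x.
Proof.
rewrite /sform adjmxD adjmxZ !mulmxDl !mulmxDr -!scalemxAl -!scalemxAr !mxE.
ring.
Qed.

Lemma sform_congr m n (Y : 'M[C]_(m, n)) (Z : 'M[C]_m) (x y : 'cV[C]_n) :
  sform (adjmx Y *m Z *m Y) x y = sform Z (Y *m x) (Y *m y).
Proof. by rewrite /sform adjmxM !mulmxA. Qed.

(* Over the complex numbers a positive semidefinite matrix is Hermitian:
   polarization of the real values sform X v v at v = e_i + e_j and
   v = e_i + 'i e_j determines both X i j and X j i. *)
Lemma psd_hermitian n (X : 'M[C]_n) : psd X -> forall i j, (X j i)^* = X i j.
Proof.
move=> psdX i j.
have real_diag v : (sform X v v)^* = sform X v v.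
  exact/conj_Creal/ger0_real/psdX.
have conjD (p q : C) : (p + q)^* = p^* + q^* by exact: rmorphD.
have conjM (p q : C) : (p * q)^* = p^* * q^* by exact: rmorphM.
rewrite -(sform_delta X i j) -(sform_delta X j i).
set x := delta_mx i 0; set y := delta_mx j 0.
have /eqP real1 := real_diag (x + 1 *: y).
have /eqP reali := real_diag (x + 'i *: y).
rewrite sform_expand !conjD !conjM !conjC1 real_diag [(sform X y y)^*]real_diag
  -subr_eq0 in real1.
rewrite sform_expand !conjD !conjM !conjCK !conjCi real_diag
  [(sform X y y)^*]real_diag -subr_eq0 in reali.
(* 'i times the first identity plus the second isolates X j i and X i j *)
have : 'i * (((sform X y x)^* - sform X x y) *+ 2) = 0.
  by rewrite -[RHS](addr0 0) -{1}(mulr0 'i) -{1}(eqP real1) -{1}(eqP reali); ring.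
move/eqP; rewrite mulf_eq0 (negbTE (neq0Ci _)) /= mulrn_eq0 /= subr_eq0.
by move/eqP.
Qed.

Lemma psd_spectral n (X : 'M[C]_n) : psd X ->
  exists (P : 'M[C]_n) (d : 'rV[C]_n),
    (forall l, 0 <= d 0 l) /\ X = adjmx P *m diag_mx d *m P.
Proof.
move=> psdX.
have X_adj : (X ^t*)%sesqui = X.
  by apply/matrixP => a b; rewrite !mxE psd_hermitian.
have X_normal : X \is normalmx by apply/normalmxP; rewrite X_adj.
have /orthomx_spectralP X_spectral := X_normal.
set P := spectralmx X in X_spectral; set d := spectral_diag X in X_spectral.
have P_unitary : P \is unitarymx by exact: spectral_unitarymx.
have adjP : adjmx P = (P ^t*)%sesqui by apply/matrixP => a b; rewrite !mxE.
have P_adjP : P *m adjmx P = 1%:M by rewrite adjP; apply/unitarymxP.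
rewrite invmx_unitary // -adjP in X_spectral.
exists P, d; split => // l.
have : 0 <= sform X _ _ := psdX (adjmx P *m delta_mx l 0).
by rewrite X_spectral sform_congr !mulmxA P_adjP !mul1mx sform_delta mxE eqxx.
Qed.

Lemma sform_diag_tens k m (d : 'rV[C]_k) (B : 'M[C]_m) (u : 'cV[C]_(k * m)) :
  sform (diag_mx d *t B) u u =
  \sum_l d 0 l * sform B (\col_a u (mxtens_index (l, a)) 0)
                         (\col_a u (mxtens_index (l, a)) 0).
Proof.
rewrite sformE sum_mxtens; apply: eq_bigr => l _.
rewrite sformE mulr_sumr; apply: eq_bigr => a _.
rewrite sum_mxtens (bigD1 l) //= [X in _ + X]big1 ?addr0; last first.
  move=> j /negbTE nlj; apply: big1 => b _.
  by rewrite tensmxE mxE eq_sym nlj mulr0n mul0r mulr0 mul0r.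
rewrite mulr_sumr; apply: eq_bigr => b _.
by rewrite tensmxE !mxE eqxx mulr1n; ring.
Qed.

(* Kronecker products of positive semidefinite matrices are positive
   semidefinite: with A = P^* diag(d) P, the form of A (x) B is a
   nonnegative combination d_l of values of the form of B. *)
Lemma psd_tensmx k m (A : 'M[C]_k) (B : 'M[C]_m) : psd A -> psd B -> psd (A *t B).
Proof.
move=> psdA psdB v; have [P [d [d_ge0 A_spectral]]] := psd_spectral psdA.
have AB_congr : A *t B = adjmx (P *t 1%:M) *m (diag_mx d *t B) *m (P *t 1%:M).
  by rewrite A_spectral adjmx_tens adjmx1 !tensmx_mul mul1mx mulmx1.
change (0 <= sform (A *t B) v v); rewrite AB_congr sform_congr sform_diag_tens.
by apply: sumr_ge0 => l _; apply: mulr_ge0 => //; exact: psdB.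
Qed.

Lemma density_tensmx n m (A : 'M[C]_n) (B : 'M[C]_m) :
  density A -> density B -> density (A *t B).
Proof.
move=> [psdA trA] [psdB trB]; split; first exact: psd_tensmx.
by rewrite mxtrace_tensmx trA trB mulr1.
Qed.

Lemma density_castmx n m (E : n = m) (A : 'M[C]_n) :
  density A -> density (castmx (E, E) A).
Proof. by move=> [psdA trA]; split; [exact: psd_castmx | rewrite mxtrace_castmx]. Qed.

End Positivity.

Section FisherBounds.
Variable R : realType.
Local Notation C := (R[i]).
Local Notation idt k Phi := (@idtens _ k _ _ Phi).
Local Open Scope ereal_scope.

Lemma IF_castmx (IF : FisherInfo R) n m (E : n = m) (f : R -> 'M[C]_n) theta :
  IF m theta (fun t => castmx (E, E) (f t)) = IF n theta f.
Proof. by case: m / E; congr (IF _ _ _). Qed.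

(* x <= y + z gives x - y <= z for all extended reals: unlike leeBlDl no
   finiteness of y is needed, since an infinite IF(rho) may occur. *)
Lemma sube_le_of_le_adde (x y z : \bar R) : x <= y + z -> x - y <= z.
Proof.
move: x y z => [x| |] [y| |] [z| |] //=; rewrite ?lee_fin.
- by move=> h; rewrite lerBlDr addrC.
all: by move=> h; rewrite ?leey ?addeNy ?addNye ?leNye.
Qed.

Lemma amortized_le_env (IF : FisherInfo R) a b e (N : R -> 'M[C]_a -> 'M[C]_b)
    (rhoE : R -> 'M[C]_e) (M : 'M[C]_(a * e) -> 'M[C]_b) theta :
  gen_fisher_info IF -> subadditive_product IF -> env_parameterized N rhoE M ->
  amortized IF N theta <= IF e theta rhoE.
Proof.
move=> IF_dpi IF_sub [M_channel rhoE_density _ N_env].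
apply: ge_ereal_sup => _ [r [rho [rho_density ->]]].
apply: sube_le_of_le_adde.
set E := esym (mulnA r a e).
have -> : (fun t => idt r (N t) (rho t)) =
          (fun t => idt r M (castmx (E, E) (rho t *t rhoE t))).
  by apply: funext => t; rewrite N_env.
have input_density t : density (castmx (E, E) (rho t *t rhoE t)).
  exact/density_castmx/density_tensmx.
apply: le_trans (IF_dpi _ _ _ _ _ (channel_idtens r M_channel) input_density) _.
by rewrite IF_castmx; exact: IF_sub.
Qed.

(* Lower bound: the theta-independent seizing state costs no information,
   and the seizing channel D extracts the environment states. *)
Lemma env_le_amortized (IF : FisherInfo R) a b e (N : R -> 'M[C]_a -> 'M[C]_b)
    (rhoE : R -> 'M[C]_e) theta r (zeta : 'M[C]_(r * a))
    (D : 'M[C]_(r * b) -> 'M[C]_e) :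
  gen_fisher_info IF -> weakly_faithful IF -> (forall t, is_channel (N t)) ->
  density zeta -> is_channel D ->
  (forall t, D (idt r (N t) zeta) = rhoE t) ->
  IF e theta rhoE <= amortized IF N theta.
Proof.
move=> IF_dpi IF_wf N_channel zeta_density D_channel D_seizes.
have zeta_gain : IF e theta rhoE <=
    IF _ theta (fun t => idt r (N t) zeta) - IF _ theta (fun _ => zeta).
  rewrite IF_wf // sube0 -(funext D_seizes).
  by apply: IF_dpi => // t; exact: density_idtens.
apply: le_trans zeta_gain _; apply: ereal_sup_ubound.
by exists r, (fun _ => zeta).
Qed.

End FisherBounds.

Theorem mainTheorem19 (R : realType) (IF : FisherInfo R) (a b e : nat)
  (N : R -> 'M[R[i]]_a -> 'M[R[i]]_b) (rhoE : R -> 'M[R[i]]_e) (theta : R) :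
  gen_fisher_info IF -> weakly_faithful IF -> subadditive_product IF ->
  (forall t, is_channel (N t)) -> env_seizable N rhoE ->
  amortized IF N theta = IF e theta rhoE.
Proof.
move=> IF_dpi IF_wf IF_sub N_channel.
move=> [[M N_env] [r [zeta [D [zeta_density D_channel D_seizes]]]]].
apply: le_anti; apply/andP; split.
- exact: amortized_le_env IF_dpi IF_sub N_env.
- exact: env_le_amortized IF_dpi IF_wf N_channel zeta_density D_channel D_seizes.
Qed.
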